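(* Let $\gamma$ be a planar strictly convex $C^2$ smooth closed curve and consider the Birkhoff billiard map $T$ in $\gamma$ on the phase cylinder $\mathbb{A}$ of oriented lines intersecting $\gamma$. Let $\mathcal{M}_L$ be the set swept by m-orbits for the generating function $L(s,s_1)=|\gamma(s_1)-\gamma(s)|$ in the coordinates $(s,\cos\delta)$, and $\mathcal{M}_S$ the set swept by m-orbits for the generating function $S(\varphi,\varphi_1)=2h(\psi)\sin\delta$, $\psi=\frac{\varphi+\varphi_1}{2}$, $\delta=\frac{\varphi_1-\varphi}{2}$, in the coordinates $(\varphi,p)$. Then $\mathcal{M}_L=\mathcal{M}_S$.
   Context: An oriented line meeting $\gamma$ at the point $\gamma(s)$ ($s$ arc length) with angle $\delta\in(0,\pi)$ to the tangent has coordinates $(s,\cos\delta)$; alternatively it has coordinates $(\varphi,p)$, where $\varphi$ is the angle between the right unit normal of the line and the horizontal direction and $p$ is the signed distance from the origin (an interior point) to the line. Both are symplectic coordinates on $\mathbb{A}$. $h$ is the support function of $\gamma$, $h(\psi)=\max_{X\in\gamma}\langle X,(\cos\psi,\sin\psi)\rangle$. Generating function convention: $T(s,\cos\delta)=(s_1,\cos\delta_1)$ iff $\cos\delta=-L_1(s,s_1)$, $\cos\delta_1=L_2(s,s_1)$; $T(\varphi,p)=(\varphi_1,p_1)$ iff $p=-S_1(\varphi,\varphi_1)$, $p_1=S_2(\varphi,\varphi_1)$; both satisfy $L_{12}>0$, $S_{12}>0$ (subscripts denote partial derivatives). For a generating function $H$ (either $L$ or $S$), a configuration $\{q_n\}_{n\in\mathbb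 Z}$ (first coordinates of an orbit) is an m-configuration if for any integers $M<N$ the segment $(q_{M+1},\dots,q_{N-1})$ is a local maximum of $\sum_{n=M}^{N-1}H(x_n,x_{n+1})$ with fixed end points $x_M=q_M$, $x_N=q_N$; the corresponding orbits are m-orbits. *)

From Stdlib Require Import Reals ZArith.
From Coquelicot Require Import Coquelicot.
Open Scope R_scope.

Definition C2fun (f : R -> R) : Prop :=
  (forall t, ex_derive f t) /\
  (forall t, ex_derive (Derive f) t) /\
  (forall t, continuous (Derive (Derive f)) t).

(** gamma(t) = (g1 t, g2 t), arc-length parametrised, P-periodic (P = length),
    C^2, counterclockwise, strictly convex: every tangent line meets the
    curve only at its tangency point and the curve lies strictly to the left
    (i.e. on the side of the inward normal nu = J gamma'). *)
Definition tang1 (g1 g2 : R -> R) (t : R) : R := Derive g1 t.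
Definition tang2 (g1 g2 : R -> R) (t : R) : R := Derive g2 t.
Definition nrm1 (g1 g2 : R -> R) (t : R) : R := - Derive g2 t.
Definition nrm2 (g1 g2 : R -> R) (t : R) : R := Derive g1 t.

Definition strictly_convex_C2_closed_curve (g1 g2 : R -> R) (P : R) : Prop :=
  0 < P /\ C2fun g1 /\ C2fun g2 /\
  (forall t, g1 (t + P) = g1 t /\ g2 (t + P) = g2 t) /\
  (forall t, (Derive g1 t) ^ 2 + (Derive g2 t) ^ 2 = 1) /\
  (forall t t', (forall k : Z, t' <> t + IZR k * P) ->
     (g1 t' - g1 t) * nrm1 g1 g2 t + (g2 t' - g2 t) * nrm2 g1 g2 t > 0).

Definition origin_interior (g1 g2 : R -> R) : Prop :=
  forall t, g1 t * nrm1 g1 g2 t + g2 t * nrm2 g1 g2 t < 0.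

Definition support_fun (g1 g2 : R -> R) (psi : R) : R :=
  real (Lub_Rbar (fun r => exists t, r = g1 t * cos psi + g2 t * sin psi)).

(** * Oriented lines
    An oriented line is represented by (its right unit normal, signed distance
    from the origin): the line { X | <X,n> = p } oriented by the direction d
    whose right unit normal is n, i.e. d = (-n2, n1). *)
Definition oline := ((R * R) * R)%type.

Definition line_of_phip (phi p : R) : oline := ((cos phi, sin phi), p).

(** line with coordinates (s, cos delta): through gamma(s), direction
    e = cos delta * tau(s) + sin delta * nu(s), delta in (0,pi). *)
Definition line_of_scos (g1 g2 : R -> R) (s y : R) : oline :=
  let sn := sqrt (1 - y ^ 2) in
  let e1 := y * tang1 g1 g2 s + sn * nrm1 g1 g2 s in
  let e2 := y * tang2 g1 g2 s + sn * nrm2 g1 g2 s in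
  let n1 := e2 in
  let n2 := - e1 in
  ((n1, n2), g1 s * n1 + g2 s * n2).

(** Phase cylinder A in each coordinate system (lifted first coordinate). *)
Definition inA_L (s y : R) : Prop := -1 < y < 1.
Definition inA_S (g1 g2 : R -> R) (phi p : R) : Prop :=
  - support_fun g1 g2 (phi + PI) < p < support_fun g1 g2 phi.

Definition Lgen (g1 g2 : R -> R) (s s1 : R) : R :=
  sqrt ((g1 s1 - g1 s) ^ 2 + (g2 s1 - g2 s) ^ 2).

Definition Sgen (g1 g2 : R -> R) (phi phi1 : R) : R :=
  2 * support_fun g1 g2 ((phi + phi1) / 2) * sin ((phi1 - phi) / 2).

(** * Orbits of T in coordinates given by a generating function H (on the
    universal cover, period Per of the first coordinate):
    T(x_n, y_n) = (x_{n+1}, y_{n+1}) iff y_n = -H_1(x_n,x_{n+1}),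
    y_{n+1} = H_2(x_n,x_{n+1}), with x_n < x_{n+1} < x_n + Per. *)
Definition gen_orbit (H : R -> R -> R) (Per : R) (inA : R -> R -> Prop)
    (q y : Z -> R) : Prop :=
  forall n : Z,
    inA (q n) (y n) /\
    q n < q (n + 1)%Z < q n + Per /\
    is_derive (fun t => H t (q (n + 1)%Z)) (q n) (- y n) /\
    is_derive (fun t => H (q n) t) (q (n + 1)%Z) (y (n + 1)%Z).

Fixpoint seg_sum (H : R -> R -> R) (x : Z -> R) (M : Z) (k : nat) : R :=
  match k with
  | O => 0
  | S k' => H (x M) (x (M + 1)%Z) + seg_sum H x (M + 1)%Z k'
  end.

Definition m_config (H : R -> R -> R) (q : Z -> R) : Prop :=
  forall M N : Z, (M < N)%Z ->
    exists eps : R, 0 < eps /\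
      forall x : Z -> R, x M = q M -> x N = q N ->
        (forall i : Z, (M < i < N)%Z -> Rabs (x i - q i) < eps) ->
        seg_sum H x M (Z.to_nat (N - M)) <= seg_sum H q M (Z.to_nat (N - M)).

Definition M_L (g1 g2 : R -> R) (P : R) (l : oline) : Prop :=
  exists q y : Z -> R,
    gen_orbit (Lgen g1 g2) P inA_L q y /\ m_config (Lgen g1 g2) q /\
    exists n : Z, l = line_of_scos g1 g2 (q n) (y n).

Definition M_S (g1 g2 : R -> R) (l : oline) : Prop :=
  exists q p : Z -> R,
    gen_orbit (Sgen g1 g2) (2 * PI) (inA_S g1 g2) q p /\ m_config (Sgen g1 g2) q /\
    exists n : Z, l = line_of_phip (q n) (p n).

From Stdlib Require Import Reals ZArith Lra Lia Psatz IndefiniteDescription.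
From Coquelicot Require Import Coquelicot.
Open Scope R_scope.

(* Both generating functions are extremal values of the one function
   [height_perp s phi = <gamma s, (- sin phi, cos phi)>]:
     L (s, s') = max_phi (height_perp s' phi - height_perp s phi), attained at the
                 normal angle phi of the chord from gamma s to gamma s';
     S (phi, phi') >= height_perp s phi - height_perp s phi' for every s (when
                 phi < phi' < phi + 2 pi), with equality at the support point s of
                 the mid-direction (phi + phi') / 2.
   An orbit in either coordinate system thus determines an interlaced sequence
   ..., q n, phi n, q (n + 1), phi (n + 1), ... which is an orbit in the other
   system and sweeps the same oriented lines.  Along it the two actions differ by
   telescoping boundary terms, while near it each action is bounded by the other
   plus the same boundary terms, so local maxima correspond. *)

Lemma seg_sum_shift H (x y : Z -> R) c M k :
  (forall n, x n = y (n + c)%Z) -> seg_sum H x M k = seg_sum H y (M + c)%Z k.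
Proof.
  intros Exy; revert M; induction k as [|k IH]; intros M; cbn [seg_sum]; [reflexivity|].
  rewrite IH, !Exy. replace (M + 1 + c)%Z with (M + c + 1)%Z by lia. reflexivity.
Qed.

Lemma m_config_shift H q c : m_config H q -> m_config H (fun n => q (n + c)%Z).
Proof.
  intros Hq M N HMN.
  destruct (Hq (M + c)%Z (N + c)%Z ltac:(lia)) as [eps [Heps Hmax]].
  exists eps; split; [exact Heps|]. intros x HxM HxN Hx.
  set (y := fun n => x (n - c)%Z).
  assert (Exy : forall n, x n = y (n + c)%Z) by (intros n; unfold y; f_equal; lia).
  rewrite !(seg_sum_shift H _ _ c M _ Exy), (seg_sum_shift H _ q c M _ (fun n => eq_refl)).
  replace (N - M)%Z with (N + c - (M + c))%Z by lia.
  apply Hmax; rewrite <- ?Exy; auto.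
  intros i Hi. replace i with (i - c + c)%Z by lia. rewrite <- Exy. apply Hx. lia.
Qed.

Lemma uniform_radius (Q : Z -> R -> Prop) (M N : Z) :
  (forall k d d', 0 < d' <= d -> Q k d -> Q k d') ->
  (forall k, (M <= k <= N)%Z -> exists d, 0 < d /\ Q k d) ->
  exists d, 0 < d /\ forall k, (M <= k <= N)%Z -> Q k d.
Proof.
  intros Hmono. destruct (Z_lt_le_dec N M) as [HNM|HMN].
  { intros _. exists 1. split; [lra | intros k Hk; lia]. }
  replace N with (M + Z.of_nat (Z.to_nat (N - M)))%Z by lia.
  induction (Z.to_nat (N - M)) as [|k IH]; intros Hk.
  - destruct (Hk M ltac:(lia)) as [d [Hd HQ]].
    exists d. split; [exact Hd|]. intros k Hk'. replace k with M by lia. exact HQ.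
  - destruct IH as [d0 [Hd0 H0]]; [intros j Hj; apply Hk; lia|].
    destruct (Hk (M + Z.of_nat (S k))%Z ltac:(lia)) as [d1 [Hd1 H1]].
    exists (Rmin d0 d1). split; [apply Rmin_pos; assumption|].
    intros j Hj. destruct (Z.eq_dec j (M + Z.of_nat (S k))) as [->|Hne].
    + apply (Hmono _ d1); [split; [apply Rmin_pos|apply Rmin_r]|]; assumption.
    + apply (Hmono _ d0); [split; [apply Rmin_pos|apply Rmin_l]|apply H0; lia]; assumption.
Qed.

Fixpoint sum_from (A : Z -> R) (m : Z) (k : nat) : R :=
  match k with O => 0 | S k => A m + sum_from A (m + 1)%Z k end.

Lemma sum_from_snoc A m k : sum_from A m (S k) = sum_from A m k + A (m + Z.of_nat k)%Z.
Proof.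
  revert m; induction k as [|k IH]; intros m.
  - cbn. rewrite Z.add_0_r. ring.
  - change (sum_from A m (S (S k))) with (A m + sum_from A (m + 1) (S k)).
    change (sum_from A m (S k)) with (A m + sum_from A (m + 1) k).
    rewrite IH. replace (m + Z.of_nat (S k))%Z with (m + 1 + Z.of_nat k)%Z by lia. ring.
Qed.

Lemma Z_primitive (A : Z -> R) (x0 : R) :
  exists f : Z -> R, f 0%Z = x0 /\ forall n, f (n + 1)%Z = f n + A n.
Proof.
  exists (fun n => if Z_le_dec 0 n then x0 + sum_from A 0 (Z.to_nat n)
                   else x0 - sum_from A n (Z.to_nat (- n))).
  split; [cbn; ring|]. intros n; cbv beta.
  destruct (Z_le_dec 0 (n + 1)), (Z_le_dec 0 n); try lia.
  - rewrite Z2Nat.inj_add, Nat.add_1_r, sum_from_snoc, Z2Nat.id by lia. rewrite Z.add_0_l. ring.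
  - replace (Z.to_nat (n + 1)) with O by lia. replace (Z.to_nat (- n)) with 1%nat by lia.
    cbn [sum_from]. ring.
  - replace (Z.to_nat (- n)) with (S (Z.to_nat (- (n + 1)))) by lia. cbn [sum_from]. ring.
Qed.

Lemma Z_ind_from0 (Pr : Z -> Prop) :
  Pr 0%Z -> (forall n, Pr n <-> Pr (n + 1)%Z) -> forall n, Pr n.
Proof. intros H0 HS. apply Z.bi_induction; [intros ? ? ->; reflexivity|exact H0|exact HS]. Qed.

Section Calibration.
Variables (Ha Hb W : R -> R -> R).

Lemma seg_sum_calibrated_le (x s : Z -> R) M k :
  (forall n, (M <= n < M + Z.of_nat k)%Z ->
     Ha (x n) (x (n + 1)%Z) = W (s (n + 1)%Z) (x n) - W (s (n + 1)%Z) (x (n + 1)%Z)) ->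
  (forall n, (M <= n <= M + Z.of_nat k)%Z ->
     W (s (n + 1)%Z) (x n) - W (s n) (x n) <= Hb (s n) (s (n + 1)%Z)) ->
  seg_sum Ha x M k <=
    seg_sum Hb s M (S k) + W (s M) (x M) - W (s (M + Z.of_nat k + 1)%Z) (x (M + Z.of_nat k)%Z).
Proof.
  revert M; induction k as [|k IH]; intros M Ea Eb; cbn [seg_sum].
  - specialize (Eb M ltac:(lia)). rewrite Z.add_0_r. lra.
  - specialize (IH (M + 1)%Z (fun n Hn => Ea n ltac:(lia)) (fun n Hn => Eb n ltac:(lia))).
    cbn [seg_sum] in IH. replace (M + 1 + Z.of_nat k)%Z with (M + Z.of_nat (S k))%Z in IH by lia.
    specialize (Ea M ltac:(lia)); specialize (Eb M ltac:(lia)). lra.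
Qed.

Lemma seg_sum_calibrated (x s : Z -> R) M k :
  (forall n, (M <= n < M + Z.of_nat k)%Z ->
     Ha (x n) (x (n + 1)%Z) = W (s (n + 1)%Z) (x n) - W (s (n + 1)%Z) (x (n + 1)%Z)) ->
  (forall n, (M <= n <= M + Z.of_nat k)%Z ->
     Hb (s n) (s (n + 1)%Z) = W (s (n + 1)%Z) (x n) - W (s n) (x n)) ->
  seg_sum Ha x M k =
    seg_sum Hb s M (S k) + W (s M) (x M) - W (s (M + Z.of_nat k + 1)%Z) (x (M + Z.of_nat k)%Z).
Proof.
  revert M; induction k as [|k IH]; intros M Ea Eb; cbn [seg_sum].
  - specialize (Eb M ltac:(lia)). rewrite Z.add_0_r. lra.
  - specialize (IH (M + 1)%Z (fun n Hn => Ea n ltac:(lia)) (fun n Hn => Eb n ltac:(lia))).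
    cbn [seg_sum] in IH. replace (M + 1 + Z.of_nat k)%Z with (M + Z.of_nat (S k))%Z in IH by lia.
    specialize (Ea M ltac:(lia)); specialize (Eb M ltac:(lia)). lra.
Qed.

Lemma calibrating_points_exist (a b x : Z -> R) M N eps del : 0 < eps ->
  (forall k, (M <= k < N)%Z -> forall y y', Rabs (y - a k) < del -> Rabs (y' - a (k + 1)%Z) < del ->
     exists s, Rabs (s - b (k + 1)%Z) < eps /\ Ha y y' = W s y - W s y') ->
  (forall i, (M <= i <= N)%Z -> Rabs (x i - a i) < del) ->
  exists s : Z -> R, s M = b M /\ s (N + 1)%Z = b (N + 1)%Z /\
    (forall i, (M <= i <= N + 1)%Z -> Rabs (s i - b i) < eps) /\
    (forall n, (M <= n < N)%Z ->
       Ha (x n) (x (n + 1)%Z) = W (s (n + 1)%Z) (x n) - W (s (n + 1)%Z) (x (n + 1)%Z)).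
Proof.
  intros Heps Hstab Hx.
  destruct (functional_choice (fun n s' =>
    ((M < n <= N)%Z -> Rabs (s' - b n) < eps /\
        Ha (x (n - 1)%Z) (x n) = W s' (x (n - 1)%Z) - W s' (x n)) /\
    (~ (M < n <= N)%Z -> s' = b n))) as [s Hs].
  { intros n. destruct (Z_lt_le_dec M n); [destruct (Z_le_gt_dec n N)|].
    - replace n with (n - 1 + 1)%Z at 1 3 4 by lia.
      destruct (Hstab (n - 1)%Z ltac:(lia) (x (n - 1)%Z) (x (n - 1 + 1)%Z)) as [s' Hs'];
        [apply Hx; lia .. |].
      replace (n - 1 + 1)%Z with n in Hs' by lia.
      exists s'. split; [intros _; exact Hs'|intros; lia].
    - exists (b n). split; [intros; lia|reflexivity].
    - exists (b n). split; [intros; lia|reflexivity]. }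
  exists s. split; [|split; [|split]].
  - apply (proj2 (Hs M)). lia.
  - apply (proj2 (Hs (N + 1)%Z)). lia.
  - intros i Hi. destruct (Z_lt_le_dec M i); [destruct (Z_le_gt_dec i N)|].
    + apply (proj1 (Hs i)). lia.
    + rewrite (proj2 (Hs i)), Rminus_diag, Rabs_R0 by lia. exact Heps.
    + rewrite (proj2 (Hs i)), Rminus_diag, Rabs_R0 by lia. exact Heps.
  - intros n Hn. destruct (proj1 (Hs (n + 1)%Z) ltac:(lia)) as [_ E].
    rewrite Z.add_simpl_r in E. exact E.
Qed.

(* [W] calibrates [Ha] against [Hb]: near [b], [Hb] dominates the increments of
   [W], with equality along the pair [(a, b)], and [Ha] is realised by [W] at points
   close to [b].  Telescoping bounds the action of any perturbation of a segment of
   [a] by an [Hb]-action of a perturbation of [b], plus the boundary terms of the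
   exact identity. *)
Lemma m_config_calibrated (a b : Z -> R) :
  (forall n, Ha (a n) (a (n + 1)%Z) = W (b (n + 1)%Z) (a n) - W (b (n + 1)%Z) (a (n + 1)%Z)) ->
  (forall n, Hb (b n) (b (n + 1)%Z) = W (b (n + 1)%Z) (a n) - W (b n) (a n)) ->
  (forall n, exists rho, 0 < rho /\ forall s s' x,
     Rabs (s - b n) < rho -> Rabs (s' - b (n + 1)%Z) < rho -> W s' x - W s x <= Hb s s') ->
  (forall n eps, 0 < eps -> exists del, 0 < del /\ forall x x',
     Rabs (x - a n) < del -> Rabs (x' - a (n + 1)%Z) < del ->
     exists s, Rabs (s - b (n + 1)%Z) < eps /\ Ha x x' = W s x - W s x') ->
  m_config Hb b -> m_config Ha a.
Proof.
  intros Ea Eb Hge Hstab Hmb M N HMN.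
  destruct (Hmb M (N + 1)%Z ltac:(lia)) as [eb [Heb Hmaxb]].
  destruct (uniform_radius (fun k r => forall s s' x,
      Rabs (s - b k) < r -> Rabs (s' - b (k + 1)%Z) < r -> W s' x - W s x <= Hb s s') M N)
    as [rho [Hrho Hge']].
  { intros k d d' Hd H s s' x Hs Hs'. apply H; lra. }
  { intros k _. apply Hge. }
  set (eps := Rmin eb rho).
  assert (Heps : 0 < eps) by (apply Rmin_pos; assumption).
  destruct (uniform_radius (fun k r => forall x x',
      Rabs (x - a k) < r -> Rabs (x' - a (k + 1)%Z) < r ->
      exists s, Rabs (s - b (k + 1)%Z) < eps /\ Ha x x' = W s x - W s x') M N)
    as [del [Hdel Hstab']].
  { intros k d d' Hd H x x' Hx Hx'. apply H; lra. }
  { intros k _. apply Hstab, Heps. }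
  exists del. split; [exact Hdel|]. intros x HxM HxN Hx.
  destruct (calibrating_points_exist a b x M N eps del Heps (fun k Hk => Hstab' k ltac:(lia)))
    as (s & EsM & EsN & Hs_close & Es).
  { intros i Hi. destruct (Z.eq_dec i M) as [->|]; [rewrite HxM, Rminus_diag, Rabs_R0; exact Hdel|].
    destruct (Z.eq_dec i N) as [->|]; [rewrite HxN, Rminus_diag, Rabs_R0; exact Hdel|].
    apply Hx. lia. }
  set (K := Z.to_nat (N - M)).
  assert (EK : (M + Z.of_nat K)%Z = N) by (unfold K; lia).
  assert (Hpert : seg_sum Ha x M K <=
    seg_sum Hb s M (S K) + W (s M) (x M) - W (s (N + 1)%Z) (x N)).
  { rewrite <- EK. apply seg_sum_calibrated_le; [intros n Hn; apply Es; lia|].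
    intros n Hn. apply (Hge' n); [lia| |]; eapply Rlt_le_trans;
      [apply Hs_close; lia|apply Rmin_r|apply Hs_close; lia|apply Rmin_r]. }
  assert (Hexact : seg_sum Ha a M K =
    seg_sum Hb b M (S K) + W (b M) (a M) - W (b (N + 1)%Z) (a N)).
  { rewrite <- EK. apply seg_sum_calibrated; intros n _; [apply Ea|apply Eb]. }
  assert (Hcmp : seg_sum Hb s M (S K) <= seg_sum Hb b M (S K)).
  { replace (S K) with (Z.to_nat (N + 1 - M)) by (unfold K; lia).
    apply Hmaxb; [exact EsM|exact EsN|].
    intros i Hi. eapply Rlt_le_trans; [apply Hs_close; lia|apply Rmin_l]. }
  rewrite EsM, EsN, HxM, HxN in Hpert. fold K. lra.
Qed.

End Calibration.

Lemma reduce_mod (P a x : R) : 0 < P -> exists k : Z, a <= x + IZR k * P < a + P.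
Proof.
  intros HP. destruct (archimed ((x - a) / P)) as [H1 H2].
  exists (1 - up ((x - a) / P))%Z. rewrite minus_IZR.
  set (n := IZR (up ((x - a) / P))) in *.
  assert (E : x - a = ((x - a) / P) * P) by (field; lra).
  split; nra.
Qed.

Lemma not_congr_open (P t x : R) : 0 < P -> t < x < t + P -> forall k : Z, x <> t + IZR k * P.
Proof.
  intros HP Hx k E. destruct (Z_lt_le_dec k 1) as [Hk|Hk].
  - assert (IZR k <= 0) by (apply IZR_le; lia). nra.
  - assert (1 <= IZR k) by (apply IZR_le; lia). nra.
Qed.

Lemma periodic_lift (P : R) (sg : Z -> R) : 0 < P ->
  (forall n (k : Z), sg (n + 1)%Z <> sg n + IZR k * P) ->
  exists q : Z -> R, forall n, (exists k : Z, q n = sg n + IZR k * P) /\ q n < q (n + 1)%Z < q n + P.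
Proof.
  intros HP Hnc.
  destruct (functional_choice (fun n r =>
    0 < r < P /\ exists k : Z, r = sg (n + 1)%Z - sg n + IZR k * P)) as [r Hr].
  { intros n. destruct (reduce_mod P 0 (sg (n + 1)%Z - sg n) HP) as [k [Hk0 Hk1]].
    exists (sg (n + 1)%Z - sg n + IZR k * P). split; [|exists k; reflexivity].
    split; [|lra]. destruct Hk0 as [|E]; [assumption|].
    exfalso. apply (Hnc n (- k)%Z). rewrite opp_IZR. lra. }
  destruct (Z_primitive r (sg 0%Z)) as [q [Hq0 Hq]].
  exists q. intros n. split; [|rewrite Hq; pose proof (proj1 (Hr n)); lra].
  revert n. apply Z_ind_from0; [exists 0%Z; rewrite Hq0; ring|].
  intros n. destruct (proj2 (Hr n)) as [k' Ek']. rewrite Hq, Ek'. split.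
  - intros [k Ek]. exists (k + k')%Z. rewrite Ek, plus_IZR. ring.
  - intros [k Ek]. exists (k - k')%Z. rewrite minus_IZR. lra.
Qed.

Definition same_dir (a b : R) : Prop := cos a = cos b /\ sin a = sin b.

Lemma same_dir_refl a : same_dir a a.
Proof. split; reflexivity. Qed.

Lemma same_dir_sym a b : same_dir a b -> same_dir b a.
Proof. intros [Hc Hs]. split; symmetry; assumption. Qed.

Lemma same_dir_trans a b c : same_dir a b -> same_dir b c -> same_dir a c.
Proof. intros [Hc Hs] [Hc' Hs']. split; congruence. Qed.

Lemma same_dir_add_r a b c : same_dir (a + c) (b + c) <-> same_dir a b.
Proof.
  split; [|intros [Hc Hs]; unfold same_dir; rewrite !cos_plus, !sin_plus, Hc, Hs; auto].
  intros [Hc Hs].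
  assert (Ec : forall x, cos x = cos (x + c) * cos c + sin (x + c) * sin c).
  { intros x. rewrite <- cos_minus. f_equal. ring. }
  assert (Es : forall x, sin x = sin (x + c) * cos c - cos (x + c) * sin c).
  { intros x. rewrite <- sin_minus. f_equal. ring. }
  split; [rewrite (Ec a), (Ec b)|rewrite (Es a), (Es b)]; rewrite Hc, Hs; reflexivity.
Qed.

Lemma same_dir_acos x y : -1 < y < 1 -> cos x = y -> 0 < sin x -> same_dir x (acos y).
Proof.
  intros Hy Hc Hs. split; [rewrite cos_acos; lra|].
  rewrite sin_acos by lra. symmetry. apply sqrt_lem_1; [unfold Rsqr; nra|lra|].
  pose proof (sin2_cos2 x). unfold Rsqr in *. nra.
Qed.

Lemma not_same_dir_rot a d : 0 < d < 2 * PI -> ~ same_dir (a + d) a.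
Proof.
  intros Hd [Hc Hs].
  assert (Ed : cos d = cos (a + d) * cos a + sin (a + d) * sin a).
  { replace d with ((a + d) - a) at 1 by ring. apply cos_minus. }
  rewrite Hc, Hs in Ed. pose proof (sin2_cos2 a) as U; unfold Rsqr in U.
  replace d with (2 * (d / 2)) in Ed by field. rewrite cos_2a_sin in Ed.
  assert (0 < sin (d / 2)) by (apply sin_gt_0; lra). nra.
Qed.

Lemma angle_exists x y : x ^ 2 + y ^ 2 = 1 -> exists th, cos th = x /\ sin th = y.
Proof.
  intros H. assert (Hx : -1 <= x <= 1) by nra.
  destruct (Rle_dec 0 y) as [Hy|Hy].
  - exists (acos x). split; [apply cos_acos; exact Hx|].
    rewrite sin_acos by exact Hx. apply sqrt_lem_1; unfold Rsqr; nra.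
  - exists (- acos x). rewrite cos_neg, sin_neg, cos_acos, sin_acos by exact Hx.
    split; [reflexivity|]. enough (sqrt (1 - x²) = - y) by lra.
    apply sqrt_lem_1; unfold Rsqr; nra.
Qed.

Lemma Rabs_lin_trig x y th : Rabs (x * cos th + y * sin th) <= Rabs x + Rabs y.
Proof.
  assert (Hc : Rabs (cos th) <= 1) by (apply Rabs_le; apply COS_bound).
  assert (Hs : Rabs (sin th) <= 1) by (apply Rabs_le; apply SIN_bound).
  eapply Rle_trans; [apply Rabs_triang|]. rewrite !Rabs_mult.
  pose proof (Rabs_pos x); pose proof (Rabs_pos y). nra.
Qed.

Lemma Rabs_cos_sub a b : Rabs (cos a - cos b) <= Rabs (a - b).
Proof.
  destruct (MVT_abs cos (fun x => - sin x) b a) as [c [Hc _]].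
  { intros; apply derivable_pt_lim_cos. }
  rewrite Hc, Rabs_Ropp. pose proof (Rabs_pos (a - b)).
  assert (Rabs (sin c) <= 1) by (apply Rabs_le, SIN_bound). nra.
Qed.

Lemma Rabs_sin_sub a b : Rabs (sin a - sin b) <= Rabs (a - b).
Proof.
  destruct (MVT_abs sin cos b a) as [c [Hc _]].
  { intros; apply derivable_pt_lim_sin. }
  rewrite Hc. pose proof (Rabs_pos (a - b)).
  assert (Rabs (cos c) <= 1) by (apply Rabs_le, COS_bound). nra.
Qed.

Lemma Rabs_dir_diff u v a b :
  Rabs (u * (cos a - cos b) + v * (sin a - sin b)) <= (Rabs u + Rabs v) * Rabs (a - b).
Proof.
  eapply Rle_trans; [apply Rabs_triang|]. rewrite !Rabs_mult.
  pose proof (Rabs_cos_sub a b); pose proof (Rabs_sin_sub a b).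
  pose proof (Rabs_pos u); pose proof (Rabs_pos v). nra.
Qed.

Lemma angle_near th0 r c s : 0 < r <= 1 -> c ^ 2 + s ^ 2 = 1 ->
  0 < c * cos th0 + s * sin th0 -> Rabs (s * cos th0 - c * sin th0) < sin r ->
  exists th, Rabs (th - th0) < r /\ cos th = c /\ sin th = s.
Proof.
  intros Hr Hu HC HS. pose proof PI2_1.
  set (C := c * cos th0 + s * sin th0) in *. set (S := s * cos th0 - c * sin th0) in *.
  pose proof (sin2_cos2 th0) as U; unfold Rsqr in U.
  assert (HCS : C ^ 2 + S ^ 2 = 1) by (unfold C, S; rewrite <- Hu; nra).
  assert (HS1 : -1 <= S <= 1) by (pose proof (SIN_bound r); apply Rabs_lt_between in HS; lra).
  assert (EC : cos (asin S) = C).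
  { rewrite cos_asin by exact HS1. apply sqrt_lem_1; unfold Rsqr; nra. }
  exists (th0 + asin S). split; [|split].
  - replace (th0 + asin S - th0) with (asin S) by ring.
    pose proof (asin_bound S). apply Rabs_lt_between in HS. apply Rabs_def1.
    + destruct (Rlt_le_dec (asin S) r) as [|Hge]; [assumption|].
      apply sin_incr_1 in Hge; rewrite ?sin_asin in Hge; lra.
    + destruct (Rlt_le_dec (- r) (asin S)) as [|Hle]; [assumption|].
      apply sin_incr_1 in Hle; rewrite ?sin_asin, ?sin_neg in Hle; lra.
  - rewrite cos_plus, EC, sin_asin by exact HS1. unfold C, S.
    transitivity (c * (sin th0 * sin th0 + cos th0 * cos th0)); [ring|rewrite U; ring].
  - rewrite sin_plus, EC, sin_asin by exact HS1. unfold C, S.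
    transitivity (s * (sin th0 * sin th0 + cos th0 * cos th0)); [ring|rewrite U; ring].
Qed.

Lemma polar_angle_near th0 D r v1 v2 : 0 < D -> 0 < r <= 1 ->
  Rabs (v1 + D * sin th0) + Rabs (v2 - D * cos th0) < D * sin r / 2 ->
  exists th, Rabs (th - th0) < r /\
    v1 = sqrt (v1 ^ 2 + v2 ^ 2) * - sin th /\ v2 = sqrt (v1 ^ 2 + v2 ^ 2) * cos th.
Proof.
  intros HD Hr He. pose proof PI2_1.
  assert (Hsr : 0 < sin r <= 1) by (split; [apply sin_gt_0|apply SIN_bound]; lra).
  set (e1 := v1 + D * sin th0) in *. set (e2 := v2 - D * cos th0) in *.
  pose proof (sin2_cos2 th0) as U; unfold Rsqr in U.
  set (A := - v1 * sin th0 + v2 * cos th0). set (B := v1 * cos th0 + v2 * sin th0).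
  assert (HA : D / 2 < A).
  { assert (EA : A = D + (e2 * cos th0 + - e1 * sin th0)).
    { unfold A, e1, e2. transitivity (D * (sin th0 * sin th0 + cos th0 * cos th0)
        + ((v2 - D * cos th0) * cos th0 + - (v1 + D * sin th0) * sin th0)); [ring|rewrite U; ring]. }
    pose proof (Rabs_lin_trig e2 (- e1) th0) as L. rewrite Rabs_Ropp in L.
    apply Rabs_le_between in L. nra. }
  assert (HB : Rabs B < D * sin r / 2).
  { replace B with (e1 * cos th0 + e2 * sin th0) by (unfold B, e1, e2; ring).
    eapply Rle_lt_trans; [apply Rabs_lin_trig|exact He]. }
  set (rho := sqrt (v1 ^ 2 + v2 ^ 2)).
  assert (Hsq : rho * rho = v1 ^ 2 + v2 ^ 2) by (apply sqrt_sqrt; nra).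
  assert (Erho : rho * rho = A * A + B * B).
  { rewrite Hsq. unfold A, B.
    transitivity ((v1 ^ 2 + v2 ^ 2) * (sin th0 * sin th0 + cos th0 * cos th0)); [rewrite U|]; ring. }
  assert (Hrho0 : 0 <= rho) by apply sqrt_pos.
  assert (Hrho : A <= rho) by nra.
  destruct (angle_near th0 r (v2 / rho) (- v1 / rho) Hr) as [th [Hth [Ec Es]]].
  - replace ((v2 / rho) ^ 2 + (- v1 / rho) ^ 2) with ((v1 ^ 2 + v2 ^ 2) / (rho * rho)) by (field; lra).
    rewrite <- Hsq. field. lra.
  - replace (v2 / rho * cos th0 + - v1 / rho * sin th0) with (A / rho) by (unfold A; field; lra).
    apply Rdiv_lt_0_compat; lra.
  - replace (- v1 / rho * cos th0 - v2 / rho * sin th0) with (- (B / rho)) by (unfold B; field; lra).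
    rewrite Rabs_Ropp, Rabs_div, (Rabs_pos_eq rho) by lra.
    apply Rlt_div_l; [lra|]. apply (Rlt_le_trans _ _ _ HB). nra.
  - exists th. fold rho. split; [exact Hth|]. rewrite Ec, Es. split; field; lra.
Qed.


Section Curve.
Variables (g1 g2 : R -> R) (P : R).
Hypothesis HC : strictly_convex_C2_closed_curve g1 g2 P.

Definition height (t psi : R) : R := g1 t * cos psi + g2 t * sin psi.
Definition height_perp (t psi : R) : R := - g1 t * sin psi + g2 t * cos psi.
Definition is_support_pt (t psi : R) : Prop := forall t', height t' psi <= height t psi.

Lemma period_pos : 0 < P.
Proof. apply HC. Qed.

Lemma ex_derive_g1 t : ex_derive g1 t.
Proof. apply HC. Qed.

Lemma ex_derive_g2 t : ex_derive g2 t.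
Proof. apply HC. Qed.

Lemma tangent_unit t : Derive g1 t ^ 2 + Derive g2 t ^ 2 = 1.
Proof. apply HC. Qed.

Lemma curve_strictly_convex t t' : (forall k : Z, t' <> t + IZR k * P) ->
  0 < (g1 t' - g1 t) * - Derive g2 t + (g2 t' - g2 t) * Derive g1 t.
Proof. intros Hk. destruct HC as (_ & _ & _ & _ & _ & H). apply (H t t' Hk). Qed.

Lemma curve_periodic (k : Z) t : g1 (t + IZR k * P) = g1 t /\ g2 (t + IZR k * P) = g2 t.
Proof.
  destruct HC as (_ & _ & _ & Hper & _).
  revert t. induction k using Z.peano_ind; intro t.
  - rewrite Rmult_0_l, Rplus_0_r. auto.
  - rewrite <- Z.add_1_r, plus_IZR. replace (t + (IZR k + 1) * P) with (t + IZR k * P + P) by ring.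
    rewrite (proj1 (Hper _)), (proj2 (Hper _)). apply IHk.
  - rewrite <- Z.sub_1_r, minus_IZR. destruct (IHk (t - P)) as [A B].
    destruct (Hper (t - P)) as [C D]. replace (t - P + P) with t in C, D by ring.
    replace (t + (IZR k - 1) * P) with (t - P + IZR k * P) by ring.
    rewrite A, B, <- C, <- D. auto.
Qed.

Lemma height_periodic (k : Z) t psi : height (t + IZR k * P) psi = height t psi.
Proof. unfold height. destruct (curve_periodic k t) as [-> ->]. reflexivity. Qed.

Lemma is_support_pt_periodic (k : Z) t psi : is_support_pt t psi -> is_support_pt (t + IZR k * P) psi.
Proof. intros H t'. rewrite height_periodic. apply H. Qed.

Lemma is_support_pt_same_dir t a b : same_dir a b -> is_support_pt t a -> is_support_pt t b.
Proof. intros [Hc Hs] H t'. unfold height in *. rewrite <- Hc, <- Hs. apply H. Qed.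

Lemma continuity_pt_g1 t : continuity_pt g1 t.
Proof. apply derivable_continuous_pt, ex_derive_Reals_0, ex_derive_g1. Qed.

Lemma continuity_pt_g2 t : continuity_pt g2 t.
Proof. apply derivable_continuous_pt, ex_derive_Reals_0, ex_derive_g2. Qed.

Lemma continuity_pt_eps (f : R -> R) t : continuity_pt f t -> forall eps, 0 < eps ->
  exists del, 0 < del /\ forall x, Rabs (x - t) < del -> Rabs (f x - f t) < eps.
Proof.
  intros Hc eps He. destruct (Hc eps He) as [del [Hd H]]. exists del. split; [exact Hd|].
  intros x Hx. destruct (Req_dec x t) as [->|Hne].
  - rewrite Rminus_diag, Rabs_R0. exact He.
  - apply (H x). split; [split; [exact I|auto]|exact Hx].
Qed.

Lemma curve_continuous t eps : 0 < eps -> exists del, 0 < del /\ forall x, Rabs (x - t) < del ->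
  Rabs (g1 x - g1 t) < eps /\ Rabs (g2 x - g2 t) < eps.
Proof.
  intros He.
  destruct (continuity_pt_eps g1 t (continuity_pt_g1 t) eps He) as [d1 [Hd1 H1]].
  destruct (continuity_pt_eps g2 t (continuity_pt_g2 t) eps He) as [d2 [Hd2 H2]].
  exists (Rmin d1 d2). split; [apply Rmin_pos; assumption|].
  intros x Hx. split; [apply H1|apply H2]; eapply Rlt_le_trans; eauto; [apply Rmin_l|apply Rmin_r].
Qed.

Lemma continuity_pt_height psi t : continuity_pt (fun x => height x psi) t.
Proof.
  assert (Hcst : forall c, continuity_pt (fun _ => c) t)
    by (intros c; apply continuity_pt_const; now intros ? ?).
  unfold height. apply continuity_pt_plus; apply continuity_pt_mult;
    auto using continuity_pt_g1, continuity_pt_g2.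
Qed.

Lemma curve_bounded : exists B, 0 < B /\ forall x, Rabs (g1 x) + Rabs (g2 x) <= B.
Proof.
  pose proof period_pos as HP.
  destruct (continuity_ab_maj (fun t => Rabs (g1 t) + Rabs (g2 t)) 0 P) as [t0 [Hmax _]]; [lra| |].
  { intros c _. apply continuity_pt_plus;
      [apply (continuity_pt_comp g1 Rabs)|apply (continuity_pt_comp g2 Rabs)];
      auto using continuity_pt_g1, continuity_pt_g2, Rcontinuity_abs. }
  exists (Rabs (g1 t0) + Rabs (g2 t0) + 1).
  split; [pose proof (Rabs_pos (g1 t0)); pose proof (Rabs_pos (g2 t0)); lra|].
  intros x. destruct (reduce_mod P 0 x HP) as [k Hk].
  specialize (Hmax (x + IZR k * P)). destruct (curve_periodic k x) as [E1 E2]. rewrite E1, E2 in Hmax.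
  enough (Rabs (g1 x) + Rabs (g2 x) <= Rabs (g1 t0) + Rabs (g2 t0)) by lra. apply Hmax. lra.
Qed.

Lemma support_pt_exists psi : exists t, is_support_pt t psi.
Proof.
  pose proof period_pos as HP.
  destruct (continuity_ab_maj (fun t => height t psi) 0 P) as [t0 [Hmax _]]; [lra| |].
  { intros c _. apply continuity_pt_height. }
  exists t0. intros x. destruct (reduce_mod P 0 x HP) as [k Hk].
  rewrite <- (height_periodic k). apply Hmax. lra.
Qed.

Lemma support_fun_eq t psi : is_support_pt t psi -> support_fun g1 g2 psi = height t psi.
Proof.
  intros Hm. unfold support_fun.
  rewrite (is_lub_Rbar_unique _ (Finite (height t psi))); [reflexivity|]. split.
  - intros r [t' ->]. apply (Hm t').
  - intros b Hb. apply Hb. exists t. reflexivity.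
Qed.

Lemma height_le_support t psi : height t psi <= support_fun g1 g2 psi.
Proof. destruct (support_pt_exists psi) as [t0 H0]. rewrite (support_fun_eq t0 psi H0). apply H0. Qed.

Lemma height_lt_of_tangent t psi t' : Derive g1 t = - sin psi -> Derive g2 t = cos psi ->
  (forall k : Z, t' <> t + IZR k * P) -> height t' psi < height t psi.
Proof.
  intros E1 E2 Hk. pose proof (curve_strictly_convex t t' Hk) as S.
  rewrite E1, E2 in S. unfold height. lra.
Qed.

Lemma support_pt_of_tangent t psi : Derive g1 t = - sin psi -> Derive g2 t = cos psi ->
  is_support_pt t psi.
Proof.
  intros E1 E2 t'. pose proof period_pos as HP.
  destruct (reduce_mod P t t' HP) as [k Hk]. rewrite <- (height_periodic k).
  destruct (Req_dec (t' + IZR k * P) t) as [->|Hne]; [lra|].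
  apply Rlt_le, height_lt_of_tangent; [assumption..|]. apply not_congr_open; [exact HP|lra].
Qed.

Lemma support_pt_tangent t psi : is_support_pt t psi ->
  Derive g1 t = - sin psi /\ Derive g2 t = cos psi.
Proof.
  intros Hm. pose proof period_pos as HP.
  set (d1 := Derive g1 t). set (d2 := Derive g2 t).
  assert (Hlim : derivable_pt_lim (fun x => height x psi) t (d1 * cos psi + d2 * sin psi)).
  { apply is_derive_Reals. unfold height. auto_derive; [auto using ex_derive_g1, ex_derive_g2|].
    change (fun x => g1 x) with g1. change (fun x => g2 x) with g2. fold d1 d2. ring. }
  assert (H0 : d1 * cos psi + d2 * sin psi = 0).
  { apply (deriv_maximum _ (t - 1) (t + 1) t (exist _ _ Hlim)); [lra|lra|intros x _ _; apply Hm]. }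
  pose proof (tangent_unit t) as U. pose proof (sin2_cos2 psi) as U2. unfold Rsqr in U2.
  fold d1 d2 in U. set (lam := - d1 * sin psi + d2 * cos psi).
  assert (E1 : d1 = - lam * sin psi).
  { transitivity (d1 * (sin psi * sin psi + cos psi * cos psi)
                  - cos psi * (d1 * cos psi + d2 * sin psi));
      [rewrite U2, H0; ring|unfold lam; ring]. }
  assert (E2 : d2 = lam * cos psi).
  { transitivity (d2 * (sin psi * sin psi + cos psi * cos psi)
                  - sin psi * (d1 * cos psi + d2 * sin psi));
      [rewrite U2, H0; ring|unfold lam; ring]. }
  assert (Hl : lam = 1 \/ lam = -1) by (rewrite E1, E2 in U; nra).
  destruct Hl as [Hl|Hl]; rewrite Hl in E1, E2; [split; lra|exfalso].
  assert (Hk : forall k : Z, t + P / 2 <> t + IZR k * P) by (apply not_congr_open; lra).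
  pose proof (curve_strictly_convex t (t + P / 2) Hk) as S. fold d1 d2 in S. rewrite E1, E2 in S.
  specialize (Hm (t + P / 2)). unfold height in Hm. nra.
Qed.

Lemma height_lt_support_pt t psi t' : is_support_pt t psi -> (forall k : Z, t' <> t + IZR k * P) ->
  height t' psi < height t psi.
Proof. intros Hm. destruct (support_pt_tangent t psi Hm). apply height_lt_of_tangent; assumption. Qed.

Lemma support_pt_dir_unique t a b :
  is_support_pt t a -> is_support_pt t b -> 0 < b - a < 2 * PI -> False.
Proof.
  intros Ha Hb Hab.
  destruct (support_pt_tangent t a Ha) as [A1 A2]. destruct (support_pt_tangent t b Hb) as [B1 B2].
  apply (not_same_dir_rot a (b - a) Hab). replace (a + (b - a)) with b by ring. split; lra.
Qed.

Lemma height_dir_lipschitz B x a b : Rabs (g1 x) + Rabs (g2 x) <= B ->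
  Rabs (height x a - height x b) <= B * Rabs (a - b).
Proof.
  intros HB. unfold height.
  replace (g1 x * cos a + g2 x * sin a - (g1 x * cos b + g2 x * sin b))
    with (g1 x * (cos a - cos b) + g2 x * (sin a - sin b)) by ring.
  eapply Rle_trans; [apply Rabs_dir_diff|]. apply Rmult_le_compat_r; [apply Rabs_pos|exact HB].
Qed.

Lemma support_gap t psi e : is_support_pt t psi -> 0 < e <= P / 2 ->
  exists m, 0 < m /\ forall x, t + e <= x <= t + P - e -> height x psi <= height t psi - m.
Proof.
  intros Hm He. pose proof period_pos as HP.
  destruct (continuity_ab_min (fun x => height t psi - height x psi) (t + e) (t + P - e))
    as [x0 [Hmin Hx0]]; [lra| |].
  { intros c _. apply continuity_pt_minus; [apply continuity_pt_const; now intros ? ?|].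
    apply continuity_pt_height. }
  exists (height t psi - height x0 psi). split.
  - apply Rlt_0_minus, height_lt_support_pt; [exact Hm|]. apply not_congr_open; lra.
  - intros x Hx. specialize (Hmin x Hx). lra.
Qed.

Lemma support_pt_stable t psi : is_support_pt t psi -> forall eta, 0 < eta ->
  exists del, 0 < del /\ forall psi' t', Rabs (psi' - psi) < del -> is_support_pt t' psi' ->
    exists k : Z, Rabs (t' + IZR k * P - t) < eta.
Proof.
  intros Hm eta Heta. pose proof period_pos as HP.
  set (e := Rmin eta (P / 2)).
  assert (He : 0 < e <= P / 2) by (split; [apply Rmin_pos|apply Rmin_r]; lra).
  assert (He1 : e <= eta) by apply Rmin_l.
  destruct (support_gap t psi e Hm He) as [m [Hm0 Hgap]].
  destruct curve_bounded as [B [HB HBd]].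
  exists (m / (2 * B)). split; [apply Rdiv_lt_0_compat; lra|].
  intros psi' t' Hpsi Hm'.
  destruct (reduce_mod P (t + e) t' HP) as [k Hk].
  destruct (Rle_lt_dec (t' + IZR k * P) (t + P - e)) as [Hle|Hgt].
  - exfalso.
    pose proof (Hgap _ (conj (proj1 Hk) Hle)) as G.
    pose proof (is_support_pt_periodic k t' psi' Hm' t) as M'.
    pose proof (height_dir_lipschitz B t psi' psi (HBd t)) as L1.
    pose proof (height_dir_lipschitz B (t' + IZR k * P) psi' psi (HBd _)) as L2.
    apply Rabs_le_between in L1. apply Rabs_le_between in L2.
    assert (2 * B * Rabs (psi' - psi) < m).
    { apply (Rmult_lt_compat_l (2 * B)) in Hpsi; [|lra].
      replace (2 * B * (m / (2 * B))) with m in Hpsi by (field; lra). exact Hpsi. }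
    lra.
  - exists (k - 1)%Z. rewrite minus_IZR. apply Rabs_def1; lra.
Qed.

Lemma support_envelope t psi t' psi' : is_support_pt t psi -> is_support_pt t' psi' ->
  0 <= height t' psi' - height t psi' <=
    (Rabs (g1 t' - g1 t) + Rabs (g2 t' - g2 t)) * Rabs (psi' - psi).
Proof.
  intros Hm Hm'. split; [specialize (Hm' t); lra|].
  eapply Rle_trans; [|apply Rabs_dir_diff]. eapply Rle_trans; [|apply Rle_abs].
  specialize (Hm t'). unfold height in *. nra.
Qed.

Lemma support_fun_derive t psi : is_support_pt t psi ->
  is_derive (support_fun g1 g2) psi (height_perp t psi).
Proof.
  intros Hm. apply is_derive_Reals. intros eps Heps.
  assert (Hd : derivable_pt_lim (fun a => height t a) psi (height_perp t psi)).
  { apply is_derive_Reals. unfold height, height_perp. auto_derive; [auto|ring]. }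
  destruct (Hd (eps / 2)) as [d1 Hd1]; [lra|].
  destruct (curve_continuous t (eps / 4)) as [eta [Heta Hg]]; [lra|].
  destruct (support_pt_stable t psi Hm eta Heta) as [d2 [Hd2 Hstab]].
  assert (Hdp : 0 < Rmin d1 d2) by (apply Rmin_pos; [apply cond_pos|lra]).
  exists (mkposreal _ Hdp). intros h Hh0 Hh. simpl in Hh.
  specialize (Hd1 h Hh0 (Rlt_le_trans _ _ _ Hh (Rmin_l _ _))).
  destruct (support_pt_exists (psi + h)) as [t' Ht'].
  destruct (Hstab (psi + h) t') as [k Hk]; [|exact Ht'|].
  { replace (psi + h - psi) with h by ring. eapply Rlt_le_trans; [exact Hh|apply Rmin_r]. }
  pose proof (is_support_pt_periodic k t' _ Ht') as Ht''.
  rewrite (support_fun_eq _ _ Ht''), (support_fun_eq _ _ Hm).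
  destruct (support_envelope t psi _ _ Hm Ht'') as [R0 R1].
  destruct (Hg _ Hk) as [G1 G2]. replace (psi + h - psi) with h in R1 by ring.
  set (r := height (t' + IZR k * P) (psi + h) - height t (psi + h)) in *.
  assert (Hr : Rabs (r / h) <= eps / 2).
  { rewrite Rabs_div by exact Hh0. rewrite (Rabs_pos_eq r R0).
    apply Rle_div_l; [apply Rabs_pos_lt, Hh0|]. pose proof (Rabs_pos h). nra. }
  replace ((height (t' + IZR k * P) (psi + h) - height t psi) / h - height_perp t psi)
    with (((height t (psi + h) - height t psi) / h - height_perp t psi) + r / h)
    by (unfold r; field; exact Hh0).
  eapply Rle_lt_trans; [apply Rabs_triang|]. lra.
Qed.

Lemma height_add t p d : height t (p + d) = height t p * cos d + height_perp t p * sin d.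
Proof. unfold height, height_perp. rewrite cos_plus, sin_plus. ring. Qed.

Lemma height_perp_add t p d : height_perp t (p + d) = height_perp t p * cos d - height t p * sin d.
Proof. unfold height, height_perp. rewrite cos_plus, sin_plus. ring. Qed.

Lemma Sgen_derive_l t a b : is_support_pt t ((a + b) / 2) ->
  is_derive (fun x => Sgen g1 g2 x b) a (- height t a).
Proof.
  intros Hm. pose proof (support_fun_derive t _ Hm) as Hd.
  unfold Sgen. auto_derive; [exists (height_perp t ((a + b) / 2)); exact Hd|].
  change ((a + b) * / 2) with ((a + b) / 2). change ((b + - a) * / 2) with ((b - a) / 2).
  replace (Derive (fun x => support_fun g1 g2 x) ((a + b) / 2)) with (height_perp t ((a + b) / 2))
    by (symmetry; apply is_derive_unique; exact Hd).
  rewrite (support_fun_eq t _ Hm).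
  replace (height t a) with (height t ((a + b) / 2 + - ((b - a) / 2))) by (f_equal; field).
  rewrite height_add, cos_neg, sin_neg. field.
Qed.

Lemma Sgen_derive_r t a b : is_support_pt t ((a + b) / 2) ->
  is_derive (fun x => Sgen g1 g2 a x) b (height t b).
Proof.
  intros Hm. pose proof (support_fun_derive t _ Hm) as Hd.
  unfold Sgen. auto_derive; [exists (height_perp t ((a + b) / 2)); exact Hd|].
  change ((a + b) * / 2) with ((a + b) / 2). change ((b + - a) * / 2) with ((b - a) / 2).
  replace (Derive (fun x => support_fun g1 g2 x) ((a + b) / 2)) with (height_perp t ((a + b) / 2))
    by (symmetry; apply is_derive_unique; exact Hd).
  rewrite (support_fun_eq t _ Hm).
  replace (height t b) with (height t ((a + b) / 2 + (b - a) / 2)) by (f_equal; field).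
  rewrite height_add. field.
Qed.

Lemma Sgen_support_pt t a b : is_support_pt t ((a + b) / 2) ->
  Sgen g1 g2 a b = height_perp t a - height_perp t b.
Proof.
  intros Hm. unfold Sgen. rewrite (support_fun_eq t _ Hm).
  replace (height_perp t a) with (height_perp t ((a + b) / 2 + - ((b - a) / 2))) by (f_equal; field).
  replace (height_perp t b) with (height_perp t ((a + b) / 2 + (b - a) / 2)) by (f_equal; field).
  rewrite !height_perp_add, cos_neg, sin_neg. ring.
Qed.

Lemma height_perp_sub_le_Sgen x a b : 0 <= sin ((b - a) / 2) ->
  height_perp x a - height_perp x b <= Sgen g1 g2 a b.
Proof.
  intros Hs. unfold Sgen.
  replace (height_perp x a) with (height_perp x ((a + b) / 2 + - ((b - a) / 2))) by (f_equal; field).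
  replace (height_perp x b) with (height_perp x ((a + b) / 2 + (b - a) / 2)) by (f_equal; field).
  rewrite !height_perp_add, cos_neg, sin_neg.
  pose proof (height_le_support x ((a + b) / 2)). nra.
Qed.

(* [th] is the angle of the right unit normal of the oriented chord, i.e. the
   coordinate [phi] of the line through [gamma a] and [gamma b]. *)
Definition chord_dir (a b th : R) : Prop :=
  g1 b - g1 a = Lgen g1 g2 a b * - sin th /\ g2 b - g2 a = Lgen g1 g2 a b * cos th.

(* Cosine and sine of the angle from the tangent at [t] to the direction with
   normal angle [th]; [dir_cos] is the coordinate [cos delta]. *)
Definition dir_cos (t th : R) : R := - sin th * Derive g1 t + cos th * Derive g2 t.
Definition dir_sin (t th : R) : R := sin th * Derive g2 t + cos th * Derive g1 t.

Lemma Lgen_sqr a b : Lgen g1 g2 a b * Lgen g1 g2 a b = (g1 b - g1 a) ^ 2 + (g2 b - g2 a) ^ 2.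
Proof.
  unfold Lgen. apply sqrt_sqrt.
  pose proof (pow2_ge_0 (g1 b - g1 a)); pose proof (pow2_ge_0 (g2 b - g2 a)). lra.
Qed.

Lemma chord_sqr_pos a b : a < b < a + P -> 0 < (g1 b - g1 a) ^ 2 + (g2 b - g2 a) ^ 2.
Proof.
  intros Hab. pose proof (curve_strictly_convex a b (not_congr_open P a b period_pos Hab)) as S.
  destruct (Req_dec (g1 b - g1 a) 0) as [E1|E1]; [destruct (Req_dec (g2 b - g2 a) 0) as [E2|E2]|].
  - rewrite E1, E2 in S. lra.
  - pose proof (pow2_gt_0 _ E2). pose proof (pow2_ge_0 (g1 b - g1 a)). lra.
  - pose proof (pow2_gt_0 _ E1). pose proof (pow2_ge_0 (g2 b - g2 a)). lra.
Qed.

Lemma Lgen_pos a b : a < b < a + P -> 0 < Lgen g1 g2 a b.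
Proof. intros Hab. apply sqrt_lt_R0, chord_sqr_pos, Hab. Qed.

Lemma chord_dir_height_perp a b th : chord_dir a b th ->
  height_perp b th - height_perp a th = Lgen g1 g2 a b.
Proof.
  intros [E1 E2]. pose proof (sin2_cos2 th) as U. unfold Rsqr in U.
  transitivity (- (g1 b - g1 a) * sin th + (g2 b - g2 a) * cos th); [unfold height_perp; ring|].
  rewrite E1, E2. transitivity (Lgen g1 g2 a b * (sin th * sin th + cos th * cos th)); [ring|].
  rewrite U. ring.
Qed.

Lemma chord_dir_height a b th : chord_dir a b th -> height b th = height a th.
Proof.
  intros [E1 E2]. unfold height.
  enough ((g1 b - g1 a) * cos th + (g2 b - g2 a) * sin th = 0) by lra. rewrite E1, E2. ring.
Qed.

Lemma height_perp_sub_le_Lgen a b th : height_perp b th - height_perp a th <= Lgen g1 g2 a b.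
Proof.
  pose proof (sin2_cos2 th) as U. unfold Rsqr in U. unfold Lgen.
  set (u := g1 b - g1 a). set (v := g2 b - g2 a).
  replace (height_perp b th - height_perp a th) with (- u * sin th + v * cos th)
    by (unfold height_perp, u, v; ring).
  destruct (Rle_dec (- u * sin th + v * cos th) 0) as [Hn|Hp].
  { pose proof (sqrt_pos (u ^ 2 + v ^ 2)). lra. }
  rewrite <- (sqrt_square (- u * sin th + v * cos th)) by lra. apply sqrt_le_1_alt.
  assert (E : (- u * sin th + v * cos th) * (- u * sin th + v * cos th) + (u * cos th + v * sin th) ^ 2
     = (u ^ 2 + v ^ 2) * (sin th * sin th + cos th * cos th)) by ring.
  rewrite U in E. pose proof (pow2_ge_0 (u * cos th + v * sin th)). lra.
Qed.

Lemma chord_dir_exists a b : a < b < a + P -> exists th, chord_dir a b th.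
Proof.
  intros Hab. pose proof (Lgen_pos a b Hab) as HL. pose proof (Lgen_sqr a b) as E.
  set (L := Lgen g1 g2 a b) in *.
  destruct (angle_exists ((g2 b - g2 a) / L) (- (g1 b - g1 a) / L)) as [th [Hc Hs]].
  { replace ((((g2 b - g2 a) / L) ^ 2 + (- (g1 b - g1 a) / L) ^ 2))
      with (((g1 b - g1 a) ^ 2 + (g2 b - g2 a) ^ 2) / (L * L)) by (field; lra).
    rewrite <- E. field. lra. }
  exists th. unfold chord_dir. fold L. split; [rewrite Hs|rewrite Hc]; field; lra.
Qed.

Lemma chord_dir_same_dir a b th th' : same_dir th th' -> chord_dir a b th -> chord_dir a b th'.
Proof. intros [Hc Hs] [E1 E2]. split; [rewrite <- Hs|rewrite <- Hc]; assumption. Qed.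

Lemma chord_dir_sin_start a b th : a < b < a + P -> chord_dir a b th -> 0 < dir_sin a th.
Proof.
  intros Hab [E1 E2]. pose proof (curve_strictly_convex a b (not_congr_open P a b period_pos Hab)) as S.
  rewrite E1, E2 in S. pose proof (Lgen_pos a b Hab). unfold dir_sin. nra.
Qed.

Lemma chord_dir_sin_end a b th : a < b < a + P -> chord_dir a b th -> dir_sin b th < 0.
Proof.
  intros Hab [E1 E2]. pose proof period_pos as HP.
  assert (Hk : forall k : Z, a <> b + IZR k * P).
  { intros k E. apply (not_congr_open P (b - P) a HP ltac:(lra) (k + 1)%Z). rewrite plus_IZR. lra. }
  pose proof (curve_strictly_convex b a Hk) as S.
  replace (g1 a - g1 b) with (- (g1 b - g1 a)) in S by ring.
  replace (g2 a - g2 b) with (- (g2 b - g2 a)) in S by ring.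
  rewrite E1, E2 in S. pose proof (Lgen_pos a b Hab). unfold dir_sin. nra.
Qed.

Lemma dir_support_pt t mu th : is_support_pt t mu ->
  dir_cos t th = cos (th - mu) /\ dir_sin t th = sin (th - mu).
Proof.
  intros Hm. destruct (support_pt_tangent t mu Hm) as [E1 E2].
  unfold dir_cos, dir_sin. rewrite E1, E2, cos_minus, sin_minus. split; ring.
Qed.

Lemma Lgen_derive_l_chord a b th : a < b < a + P -> chord_dir a b th ->
  is_derive (fun x => Lgen g1 g2 x b) a (- dir_cos a th).
Proof.
  intros Hab Hch. pose proof (chord_sqr_pos a b Hab) as Hp. pose proof (Lgen_pos a b Hab) as HL.
  destruct Hch as [E1 E2].
  unfold Lgen. auto_derive; [repeat split; auto using ex_derive_g1, ex_derive_g2; lra|].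
  change (fun x => g1 x) with g1. change (fun x => g2 x) with g2.
  rewrite <- !Rminus_def.
  match goal with |- context [sqrt ?s] =>
    replace (sqrt s) with (Lgen g1 g2 a b) by (unfold Lgen; f_equal; ring) end.
  rewrite E1, E2. unfold dir_cos. field. lra.
Qed.

Lemma Lgen_derive_r_chord a b th : a < b < a + P -> chord_dir a b th ->
  is_derive (fun x => Lgen g1 g2 a x) b (dir_cos b th).
Proof.
  intros Hab Hch. pose proof (chord_sqr_pos a b Hab) as Hp. pose proof (Lgen_pos a b Hab) as HL.
  destruct Hch as [E1 E2].
  unfold Lgen. auto_derive; [repeat split; auto using ex_derive_g1, ex_derive_g2; lra|].
  change (fun x => g1 x) with g1. change (fun x => g2 x) with g2.
  rewrite <- !Rminus_def.
  match goal with |- context [sqrt ?s] =>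
    replace (sqrt s) with (Lgen g1 g2 a b) by (unfold Lgen; f_equal; ring) end.
  rewrite E1, E2. unfold dir_cos. field. lra.
Qed.

Lemma chord_dir_stable a b th0 : a < b < a + P -> chord_dir a b th0 -> forall r, 0 < r ->
  exists del, 0 < del /\ forall a' b', Rabs (a' - a) < del -> Rabs (b' - b) < del ->
    exists th, Rabs (th - th0) < r /\ chord_dir a' b' th.
Proof.
  intros Hab [E1 E2] r Hr. pose proof (Lgen_pos a b Hab) as HD. pose proof PI2_1.
  set (D := Lgen g1 g2 a b) in *. set (r' := Rmin r 1).
  assert (Hr' : 0 < r' <= 1) by (split; [apply Rmin_pos|apply Rmin_r]; lra).
  assert (Hsr : 0 < sin r') by (apply sin_gt_0; lra).
  set (kap := D * sin r' / 8).
  assert (Hkap : 0 < kap) by (unfold kap; nra).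
  destruct (curve_continuous a kap Hkap) as [da [Hda Ga]].
  destruct (curve_continuous b kap Hkap) as [db [Hdb Gb]].
  exists (Rmin da db). split; [apply Rmin_pos; assumption|]. intros a' b' Ha Hb.
  destruct (Ga a') as [Ga1 Ga2]; [eapply Rlt_le_trans; [exact Ha|apply Rmin_l]|].
  destruct (Gb b') as [Gb1 Gb2]; [eapply Rlt_le_trans; [exact Hb|apply Rmin_r]|].
  destruct (polar_angle_near th0 D r' (g1 b' - g1 a') (g2 b' - g2 a') HD Hr') as [th [Hth [F1 F2]]].
  { assert (F1 : D * sin th0 = g1 a - g1 b)
      by (replace (g1 a - g1 b) with (- (g1 b - g1 a)) by ring; rewrite E1; ring).
    assert (F2 : D * cos th0 = g2 b - g2 a) by (rewrite E2; ring).
    rewrite F1, F2.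
    replace (g1 b' - g1 a' + (g1 a - g1 b)) with ((g1 b' - g1 b) - (g1 a' - g1 a)) by ring.
    replace (g2 b' - g2 a' - (g2 b - g2 a)) with ((g2 b' - g2 b) - (g2 a' - g2 a)) by ring.
    pose proof (Rabs_triang (g1 b' - g1 b) (- (g1 a' - g1 a))) as T1.
    pose proof (Rabs_triang (g2 b' - g2 b) (- (g2 a' - g2 a))) as T2.
    rewrite Rabs_Ropp, <- Rminus_def in T1, T2.
    replace (D * sin r' / 2) with (4 * kap) by (unfold kap; field). lra. }
  exists th. split; [eapply Rlt_le_trans; [exact Hth|apply Rmin_l]|split; assumption].
Qed.

Lemma dir_cos_sin_sqr t th : dir_cos t th ^ 2 + dir_sin t th ^ 2 = 1.
Proof.
  pose proof (tangent_unit t) as U. pose proof (sin2_cos2 th) as U2. unfold Rsqr in U2.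
  unfold dir_cos, dir_sin. rewrite <- U. transitivity
    ((sin th * sin th + cos th * cos th) * (Derive g1 t ^ 2 + Derive g2 t ^ 2));
    [ring|rewrite U2; ring].
Qed.

Lemma tangent_of_dir t th :
  Derive g1 t = - sin th * dir_cos t th + cos th * dir_sin t th /\
  Derive g2 t = cos th * dir_cos t th + sin th * dir_sin t th.
Proof.
  pose proof (sin2_cos2 th) as U. unfold Rsqr in U. unfold dir_cos, dir_sin. split.
  - transitivity (Derive g1 t * (sin th * sin th + cos th * cos th)); [rewrite U|]; ring.
  - transitivity (Derive g2 t * (sin th * sin th + cos th * cos th)); [rewrite U|]; ring.
Qed.

Lemma height_lt_support_fun t th : dir_sin t th <> 0 -> height t th < support_fun g1 g2 th.
Proof.
  intros Hs. destruct (height_le_support t th) as [|E]; [assumption|exfalso].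
  assert (Hm : is_support_pt t th) by (intros t'; rewrite E; apply height_le_support).
  apply Hs. rewrite (proj2 (dir_support_pt t th th Hm)), Rminus_diag. apply sin_0.
Qed.

(* One billiard orbit, seen in both coordinate systems at once. *)
Definition dual_config (q phi : Z -> R) : Prop := forall n,
  q n < q (n + 1)%Z < q n + P /\ phi n < phi (n + 1)%Z < phi n + 2 * PI /\
  is_support_pt (q (n + 1)%Z) ((phi n + phi (n + 1)%Z) / 2) /\ chord_dir (q n) (q (n + 1)%Z) (phi n).

Lemma dual_config_L_orbit q phi : dual_config q phi ->
  gen_orbit (Lgen g1 g2) P inA_L q (fun n => dir_cos (q n) (phi n)).
Proof.
  intros Hd n. destruct (Hd n) as (Hq & Hphi & Hm & Hch).
  split; [|split; [exact Hq|split]].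
  - pose proof (chord_dir_sin_start _ _ _ Hq Hch). pose proof (dir_cos_sin_sqr (q n) (phi n)).
    unfold inA_L. nra.
  - apply Lgen_derive_l_chord; assumption.
  - replace (dir_cos (q (n + 1)%Z) (phi (n + 1)%Z)) with (dir_cos (q (n + 1)%Z) (phi n)).
    + apply Lgen_derive_r_chord; assumption.
    + rewrite (proj1 (dir_support_pt _ _ _ Hm)), (proj1 (dir_support_pt _ _ _ Hm)).
      rewrite <- cos_neg. f_equal. field.
Qed.

Lemma dual_config_S_orbit q phi : dual_config q phi ->
  gen_orbit (Sgen g1 g2) (2 * PI) (inA_S g1 g2) phi (fun n => height (q n) (phi n)).
Proof.
  intros Hd n. destruct (Hd n) as (Hq & Hphi & Hm & Hch).
  pose proof (chord_dir_sin_start _ _ _ Hq Hch) as Hs.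
  split; [|split; [exact Hphi|split]].
  - split.
    + assert (E : height (q n) (phi n + PI) = - height (q n) (phi n))
        by (unfold height; rewrite cos_plus, sin_plus, cos_PI, sin_PI; ring).
      enough (height (q n) (phi n + PI) < support_fun g1 g2 (phi n + PI)) by lra.
      apply height_lt_support_fun. unfold dir_sin in *. rewrite cos_plus, sin_plus, cos_PI, sin_PI. nra.
    + apply height_lt_support_fun. lra.
  - rewrite <- (chord_dir_height _ _ _ Hch). apply Sgen_derive_l, Hm.
  - apply Sgen_derive_r, Hm.
Qed.

Lemma dual_config_line q phi n : dual_config q phi ->
  line_of_scos g1 g2 (q n) (dir_cos (q n) (phi n)) = line_of_phip (phi n) (height (q n) (phi n)).
Proof.
  intros Hd. destruct (Hd n) as (Hq & _ & _ & Hch).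
  pose proof (chord_dir_sin_start _ _ _ Hq Hch) as Hs.
  assert (Hsq : sqrt (1 - dir_cos (q n) (phi n) ^ 2) = dir_sin (q n) (phi n)).
  { apply sqrt_lem_1; [|lra|]; pose proof (dir_cos_sin_sqr (q n) (phi n)); nra. }
  destruct (tangent_of_dir (q n) (phi n)) as [T1 T2].
  unfold line_of_scos, line_of_phip, tang1, tang2, nrm1, nrm2, height. rewrite Hsq.
  set (c := dir_cos (q n) (phi n)) in *. set (s := dir_sin (q n) (phi n)) in *.
  assert (Hcs : c * c + s * s = 1)
    by (unfold c, s; rewrite <- (dir_cos_sin_sqr (q n) (phi n)); ring).
  assert (E1 : c * Derive g2 (q n) + s * Derive g1 (q n) = cos (phi n)).
  { rewrite T1, T2. transitivity (cos (phi n) * (c * c + s * s)); [ring|rewrite Hcs; ring]. }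
  assert (E2 : - (c * Derive g1 (q n) + s * - Derive g2 (q n)) = sin (phi n)).
  { rewrite T1, T2. transitivity (sin (phi n) * (c * c + s * s)); [ring|rewrite Hcs; ring]. }
  rewrite E1, E2. reflexivity.
Qed.

Lemma dual_config_m_config_S q phi : dual_config q phi ->
  m_config (Lgen g1 g2) q -> m_config (Sgen g1 g2) phi.
Proof.
  intros Hd. apply (m_config_calibrated (Sgen g1 g2) (Lgen g1 g2) height_perp phi q).
  - intros n. apply Sgen_support_pt, Hd.
  - intros n. symmetry. apply chord_dir_height_perp, Hd.
  - intros n. exists 1. split; [lra|]. intros s s' x _ _. apply height_perp_sub_le_Lgen.
  - intros n eps Heps. destruct (Hd n) as (_ & _ & Hm & _).
    destruct (support_pt_stable _ _ Hm eps Heps) as [del [Hdel Hstab]].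
    exists del. split; [exact Hdel|]. intros x x' Hx Hx'.
    destruct (support_pt_exists ((x + x') / 2)) as [t' Ht'].
    destruct (Hstab ((x + x') / 2) t') as [k Hk]; [|exact Ht'|].
    { apply Rabs_lt_between in Hx. apply Rabs_lt_between in Hx'. apply Rabs_def1; lra. }
    exists (t' + IZR k * P). split; [exact Hk|]. apply Sgen_support_pt, is_support_pt_periodic, Ht'.
Qed.

Lemma dual_config_m_config_L q phi : dual_config q phi ->
  m_config (Sgen g1 g2) phi -> m_config (Lgen g1 g2) q.
Proof.
  intros Hd Hm.
  (* Roles swapped; [phi] is shifted so that [phi n] lies between [q n] and [q (n + 1)]. *)
  apply (m_config_calibrated (Lgen g1 g2) (Sgen g1 g2) (fun th s => - height_perp s th)
    q (fun n => phi (n + -1)%Z)); [| | | |apply m_config_shift, Hm];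
    intros n; replace (n + 1 + -1)%Z with n by lia.
  - destruct (Hd n) as (_ & _ & _ & Hch). rewrite <- (chord_dir_height_perp _ _ _ Hch). ring.
  - destruct (Hd (n + -1)%Z) as (_ & _ & Hm' & _). replace (n + -1 + 1)%Z with n in Hm' by lia.
    rewrite (Sgen_support_pt _ _ _ Hm'). ring.
  - destruct (Hd (n + -1)%Z) as (_ & Hphi & _). replace (n + -1 + 1)%Z with n in Hphi by lia.
    set (gap := phi n - phi (n + -1)%Z).
    assert (Hgap : 0 < gap < 2 * PI) by (unfold gap; lra).
    exists (Rmin gap (2 * PI - gap) / 2). split; [apply Rdiv_lt_0_compat; [apply Rmin_pos|]; lra|].
    intros s s' x Hs Hs'.
    pose proof (Rmin_l gap (2 * PI - gap)). pose proof (Rmin_r gap (2 * PI - gap)).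
    apply Rabs_lt_between in Hs. apply Rabs_lt_between in Hs'.
    enough (height_perp x s - height_perp x s' <= Sgen g1 g2 s s') by lra.
    apply height_perp_sub_le_Sgen, sin_ge_0; unfold gap in *; lra.
  - intros eps Heps. destruct (Hd n) as (Hq & _ & _ & Hch).
    destruct (chord_dir_stable _ _ _ Hq Hch eps Heps) as [del [Hdel Hstab]].
    exists del. split; [exact Hdel|]. intros x x' Hx Hx'.
    destruct (Hstab x x' Hx Hx') as [th [Hth Hch']]. exists th. split; [exact Hth|].
    rewrite <- (chord_dir_height_perp _ _ _ Hch'). ring.
Qed.

Lemma dir_cos_same_dir t a b : same_dir a b -> dir_cos t a = dir_cos t b.
Proof. intros [Hc Hs]. unfold dir_cos. rewrite Hc, Hs. reflexivity. Qed.

Lemma reflection_law s0 s1 s2 th th' y : s0 < s1 < s0 + P -> s1 < s2 < s1 + P ->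
  chord_dir s0 s1 th -> chord_dir s1 s2 th' -> -1 < y < 1 ->
  is_derive (fun t => Lgen g1 g2 s0 t) s1 y -> is_derive (fun t => Lgen g1 g2 t s2) s1 (- y) ->
  is_support_pt s1 (th + acos y) /\ same_dir th' (th + 2 * acos y).
Proof.
  intros H01 H12 Hch Hch' Hy Hd Hd'.
  assert (Ey : dir_cos s1 th = y).
  { pose proof (is_derive_unique _ _ _ Hd) as E.
    rewrite (is_derive_unique _ _ _ (Lgen_derive_r_chord _ _ _ H01 Hch)) in E. exact E. }
  assert (Ey' : dir_cos s1 th' = y).
  { pose proof (is_derive_unique _ _ _ Hd') as E.
    rewrite (is_derive_unique _ _ _ (Lgen_derive_l_chord _ _ _ H12 Hch')) in E. lra. }
  assert (Hw : sin (acos y) = - dir_sin s1 th).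
  { pose proof (chord_dir_sin_end _ _ _ H01 Hch). pose proof (dir_cos_sin_sqr s1 th).
    rewrite sin_acos by lra. rewrite <- Ey. apply sqrt_lem_1; unfold Rsqr; nra. }
  assert (Hm : is_support_pt s1 (th + acos y)).
  { destruct (tangent_of_dir s1 th) as [T1 T2].
    apply support_pt_of_tangent; [rewrite T1, sin_plus|rewrite T2, cos_plus];
      rewrite cos_acos, Hw, Ey by lra; ring. }
  split; [exact Hm|].
  destruct (dir_support_pt _ _ th' Hm) as [Ec Es]. rewrite Ey' in Ec.
  pose proof (chord_dir_sin_start _ _ _ H12 Hch') as Hs.
  apply (same_dir_add_r _ _ (- (th + acos y))).
  replace (th + 2 * acos y + - (th + acos y)) with (acos y) by ring.
  rewrite <- Rminus_def. apply same_dir_acos; [exact Hy|symmetry; exact Ec|rewrite <- Es; exact Hs].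
Qed.

Lemma L_orbit_dual_config q y : gen_orbit (Lgen g1 g2) P inA_L q y ->
  exists phi, dual_config q phi /\ forall n, y n = dir_cos (q n) (phi n).
Proof.
  intros Ho.
  destruct (functional_choice (fun n th => chord_dir (q n) (q (n + 1)%Z) th)) as [th Hth].
  { intros n. apply chord_dir_exists, (Ho n). }
  assert (Hrefl : forall n, is_support_pt (q (n + 1)%Z) (th n + acos (y (n + 1)%Z)) /\
                             same_dir (th (n + 1)%Z) (th n + 2 * acos (y (n + 1)%Z))).
  { intros n. destruct (Ho n) as (_ & Hq & _ & Hd). destruct (Ho (n + 1)%Z) as (Hy & Hq' & Hd' & _).
    apply (reflection_law (q n) _ (q (n + 1 + 1)%Z)); auto. }
  destruct (Z_primitive (fun n => 2 * acos (y (n + 1)%Z)) (th 0%Z)) as [phi [Hphi0 Hphi]].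
  assert (Hsd : forall n, same_dir (phi n) (th n)).
  { apply Z_ind_from0; [rewrite Hphi0; apply same_dir_refl|]. intros n. rewrite Hphi.
    rewrite <- (same_dir_add_r _ _ (2 * acos (y (n + 1)%Z))). split; intros H.
    - eapply same_dir_trans; [exact H|apply same_dir_sym, Hrefl].
    - eapply same_dir_trans; [exact H|apply Hrefl]. }
  exists phi. split.
  - intros n. destruct (Ho n) as (_ & Hq & _). destruct (Ho (n + 1)%Z) as (Hy & _).
    pose proof (acos_bound_lt _ Hy).
    split; [exact Hq|split; [rewrite Hphi; lra|split]].
    + replace ((phi n + phi (n + 1)%Z) / 2) with (phi n + acos (y (n + 1)%Z)) by (rewrite Hphi; field).
      apply (is_support_pt_same_dir _ (th n + acos (y (n + 1)%Z))); [|apply Hrefl].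
      apply same_dir_sym, same_dir_add_r, Hsd.
    + apply (chord_dir_same_dir _ _ (th n)); [apply same_dir_sym, Hsd|apply Hth].
  - intros n. destruct (Ho n) as (_ & Hq & Hd & _).
    rewrite (dir_cos_same_dir _ _ _ (Hsd n)).
    pose proof (is_derive_unique _ _ _ Hd) as E.
    rewrite (is_derive_unique _ _ _ (Lgen_derive_l_chord _ _ _ Hq (Hth n))) in E. lra.
Qed.

Lemma chord_dir_of_common_line s t th d : height s th = height t th ->
  height s (th + d) < height t (th + d) -> 0 < sin d -> chord_dir s t th.
Proof.
  intros Eh Hlt Hd. rewrite !height_add, Eh in Hlt.
  set (lam := height_perp t th - height_perp s th).
  assert (Hlam : 0 < lam) by (unfold lam; nra).
  pose proof (sin2_cos2 th) as U. unfold Rsqr in U.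
  assert (E0 : (g1 t - g1 s) * cos th + (g2 t - g2 s) * sin th = 0) by (unfold height in Eh; lra).
  assert (E1 : g1 t - g1 s = lam * - sin th).
  { transitivity ((g1 t - g1 s) * (sin th * sin th + cos th * cos th)); [rewrite U; ring|].
    transitivity ((g1 t - g1 s) * sin th * sin th - (g2 t - g2 s) * sin th * cos th
      + cos th * ((g1 t - g1 s) * cos th + (g2 t - g2 s) * sin th)); [ring|].
    rewrite E0. unfold lam, height_perp. ring. }
  assert (E2 : g2 t - g2 s = lam * cos th).
  { transitivity ((g2 t - g2 s) * (sin th * sin th + cos th * cos th)); [rewrite U; ring|].
    transitivity ((g2 t - g2 s) * cos th * cos th - (g1 t - g1 s) * sin th * cos th
      + sin th * ((g1 t - g1 s) * cos th + (g2 t - g2 s) * sin th)); [ring|].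
    rewrite E0. unfold lam, height_perp. ring. }
  assert (EL : Lgen g1 g2 s t = lam).
  { unfold Lgen. rewrite E1, E2. apply sqrt_lem_1; [nra|lra|].
    transitivity (lam * lam * (sin th * sin th + cos th * cos th)); [rewrite U|]; ring. }
  unfold chord_dir. rewrite EL. split; assumption.
Qed.

Lemma chord_dir_periodic a b th (k k' : Z) :
  chord_dir a b th -> chord_dir (a + IZR k * P) (b + IZR k' * P) th.
Proof.
  unfold chord_dir, Lgen.
  destruct (curve_periodic k a) as [-> ->], (curve_periodic k' b) as [-> ->]. auto.
Qed.

Lemma S_orbit_support_pts phi p : gen_orbit (Sgen g1 g2) (2 * PI) (inA_S g1 g2) phi p ->
  exists sg : Z -> R, forall n, is_support_pt (sg n) ((phi n + phi (n + 1)%Z) / 2) /\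
    p n = height (sg n) (phi n) /\ p (n + 1)%Z = height (sg n) (phi (n + 1)%Z).
Proof.
  intros Ho.
  destruct (functional_choice (fun n t => is_support_pt t ((phi n + phi (n + 1)%Z) / 2))) as [sg Hsg].
  { intros n. apply support_pt_exists. }
  exists sg. intros n. destruct (Ho n) as (_ & _ & Hd1 & Hd2). split; [exact (Hsg n)|split].
  - pose proof (is_derive_unique _ _ _ Hd1) as E.
    rewrite (is_derive_unique _ _ _ (Sgen_derive_l _ _ _ (Hsg n))) in E. lra.
  - pose proof (is_derive_unique _ _ _ Hd2) as E.
    rewrite (is_derive_unique _ _ _ (Sgen_derive_r _ _ _ (Hsg n))) in E. lra.
Qed.

Lemma S_orbit_dual_config phi p : gen_orbit (Sgen g1 g2) (2 * PI) (inA_S g1 g2) phi p ->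
  exists q, dual_config q phi /\ forall n, p n = height (q n) (phi n).
Proof.
  intros Ho. pose proof period_pos as HP.
  destruct (S_orbit_support_pts phi p Ho) as [sg Hsg].
  assert (Hgap : forall n, 0 < phi (n + 1)%Z - phi n < 2 * PI)
    by (intros n; pose proof (proj1 (proj2 (Ho n))); lra).
  assert (Hnc : forall n (k : Z), sg (n - 1)%Z <> sg n + IZR k * P).
  { intros n k E. pose proof (Hgap n). pose proof (Hgap (n - 1)%Z).
    destruct (Hsg (n - 1)%Z) as [Hm _]. rewrite E, Z.sub_add in Hm.
    apply (support_pt_dir_unique (sg n + IZR k * P) _ _ Hm
      (is_support_pt_periodic _ _ _ (proj1 (Hsg n)))).
    rewrite Z.sub_add in *. lra. }
  assert (Hch : forall n, chord_dir (sg (n - 1)%Z) (sg n) (phi n)).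
  { intros n. pose proof (Hgap n).
    apply (chord_dir_of_common_line _ _ _ ((phi (n + 1)%Z - phi n) / 2)).
    - destruct (Hsg (n - 1)%Z) as (_ & _ & E). rewrite Z.sub_add in E. rewrite <- E. apply Hsg.
    - replace (phi n + (phi (n + 1)%Z - phi n) / 2) with ((phi n + phi (n + 1)%Z) / 2) by field.
      apply height_lt_support_pt; [apply Hsg|exact (Hnc n)].
    - apply sin_gt_0; lra. }
  destruct (periodic_lift P (fun n => sg (n - 1)%Z) HP) as [q Hq].
  { intros n k E. rewrite Z.add_simpl_r in E. apply (Hnc n (- k)%Z). rewrite E, opp_IZR. ring. }
  exists q. split.
  - intros n. destruct (Hq n) as ([k Ek] & Hord). destruct (Hq (n + 1)%Z) as ([k' Ek'] & _).
    rewrite Z.add_simpl_r in Ek'.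
    split; [exact Hord|split; [pose proof (Hgap n); lra|split]].
    + rewrite Ek'. apply is_support_pt_periodic, Hsg.
    + rewrite Ek, Ek'. apply chord_dir_periodic, Hch.
  - intros n. destruct (Hq n) as ([k Ek] & _). rewrite Ek, height_periodic.
    destruct (Hsg (n - 1)%Z) as (_ & _ & E). rewrite Z.sub_add in E. exact E.
Qed.

End Curve.

Theorem theorem2p3 (g1 g2 : R -> R) (P : R) :
  strictly_convex_C2_closed_curve g1 g2 P ->
  origin_interior g1 g2 ->
  forall l : oline, M_L g1 g2 P l <-> M_S g1 g2 l.
Proof.
  (* The argument never uses the position of the origin. *)
  intros HC _ l. split.
  - intros (q & y & Ho & Hm & n & ->).
    destruct (L_orbit_dual_config g1 g2 P HC q y Ho) as (phi & Hd & Hy).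
    exists phi, (fun n => height g1 g2 (q n) (phi n)). split; [|split].
    + exact (dual_config_S_orbit g1 g2 P HC q phi Hd).
    + exact (dual_config_m_config_S g1 g2 P HC q phi Hd Hm).
    + exists n. rewrite Hy. apply (dual_config_line g1 g2 P HC q phi n Hd).
  - intros (phi & p & Ho & Hm & n & ->).
    destruct (S_orbit_dual_config g1 g2 P HC phi p Ho) as (q & Hd & Hp).
    exists q, (fun n => dir_cos g1 g2 (q n) (phi n)). split; [|split].
    + exact (dual_config_L_orbit g1 g2 P HC q phi Hd).
    + exact (dual_config_m_config_L g1 g2 P HC q phi Hd Hm).
    + exists n. rewrite Hp. symmetry. apply (dual_config_line g1 g2 P HC q phi n Hd).
Qed.
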